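(* Let $b\ge 2$ with $b\not\equiv 1\pmod 3$, and let $n\ge 2$. Then $$\mathrm{Ap}(T_{b'}(n),s'_0)=\Big\{\sum_{i=1}^{n+1} t_i s'_i : (t_1,\dots,t_{n+1})\in R_{b'}(n)\Big\}.$$
   Context: For integers $b\ge2$ with $b\not\equiv1\pmod3$, $n\ge0$, $i\ge0$ put $s'_i=(b+1)b^{n+i}+1$, and $T_{b'}(n)=\langle\{s'_i:i\in\mathbb{N}\}\rangle$ (submonoid of $(\mathbb{N},+)$ generated by them). For a numerical semigroup $S$ and $x\in S\setminus\{0\}$, $\mathrm{Ap}(S,x)=\{s\in S:s-x\notin S\}$. $R_{b'}(n)$ is the set of $(t_1,\dots,t_{n+1})\in\{0,1,\dots,b\}^{n+1}$ such that: (i) if $t_i=b$ then $t_j=0$ for all $1\le j<i$; (ii) $t_{n+1}\le b-1$; (iii) if $t_{n+1}=b-1$ then $t_n\le b-1$, and if $(t_n,t_{n+1})=(b-1,b-1)$ then $t_1\le 2$ and $t_i=0$ for all $i\notin\{1,n,n+1\}$. *)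

From mathcomp Require Import all_boot.
Set Implicit Arguments. Unset Strict Implicit. Unset Printing Implicit Defensive.

Definition sgen (b n i : nat) : nat := (b + 1) * b ^ (n + i) + 1.

Definition inT (b n x : nat) : Prop :=
  exists (N : nat) (a : nat -> nat), x = \sum_(i < N) a i * sgen b n i.

(* Apery set membership: s in S and s - x notin S (integer subtraction). *)
Definition inApery (S : nat -> Prop) (x s : nat) : Prop :=
  S s /\ ~ (x <= s /\ S (s - x)).

(* R_{b'}(n): tuples (t_1,...,t_{n+1}) encoded by t : nat -> nat,
   only the values at indices 1..n+1 matter. *)
Definition inR (b n : nat) (t : nat -> nat) : Prop :=
  (forall i, 1 <= i <= n.+1 -> t i <= b) /\
  (forall i, 1 <= i <= n.+1 -> t i = b -> forall j, 1 <= j < i -> t j = 0) /\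
  t n.+1 <= b - 1 /\
  (t n.+1 = b - 1 -> t n <= b - 1) /\
  (t n = b - 1 -> t n.+1 = b - 1 ->
     t 1 <= 2 /\ (forall i, 1 <= i <= n.+1 -> i != 1 -> i != n -> i != n.+1 -> t i = 0)).

(* Write s'_i = s'_0 + e * w_i with e = (b + 1) b^n (b - 1) and w_i = 1 + b + ... + b^(i-1)
   the base-b repunit, so that the elements of T_{b'}(n) are the numbers
   s'_0 * |u| + e * (sum of w_i, i in u) for finite multisets u of indices.  Since
   gcd(s'_0, e) = 1 and s'_0 <= e + 1, the Apery element in the residue class of e * N
   (N < s'_0) is s'_0 * m + e * N, where m is the least number of repunits summing to N.
   This minimum is attained by the skew base-b expansion of N (digits at most b, a digit b
   followed only by zeros), found by a carrying argument using w_(j+1) = b w_j + 1.  The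
   tuples of R_{b'}(n) are skew expansions of numbers below s'_0, and every such number
   has one. *)

From mathcomp Require Import all_boot zify.
Set Implicit Arguments. Unset Strict Implicit. Unset Printing Implicit Defensive.

Fixpoint digits (t : nat -> nat) k : seq nat :=
  if k is k'.+1 then digits t k' ++ nseq (t k) k else [::].

Lemma digitsS t k : digits t k.+1 = digits t k ++ nseq (t k.+1) k.+1.
Proof. by []. Qed.

Lemma digits_pred t k : 0 < k -> digits t k = digits t k.-1 ++ nseq (t k) k.
Proof. by case: k. Qed.

Lemma eq_digits t t' k : (forall i, 1 <= i <= k -> t i = t' i) -> digits t k = digits t' k.
Proof.
elim: k => [|k IH] //= tt'; rewrite tt' ?leqnn // IH // => i /andP[i_gt0 i_le].
by apply: tt'; rewrite i_gt0 ltnW.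
Qed.

Lemma digits_eq0 t k : (forall i, 1 <= i <= k -> t i = 0) -> digits t k = [::].
Proof. by move=> t0; rewrite (@eq_digits _ (fun=> 0)) //; elim: k {t0} => //= k ->. Qed.

Lemma all_digits_gt0 t k : all (leq 1) (digits t k).
Proof. by elim: k => //= k IH; rewrite all_cat IH all_nseq orbT. Qed.

Lemma digits_low t k : 0 < k -> (forall i, 1 < i <= k -> t i = 0) ->
  digits t k = nseq (t 1) 1.
Proof.
case: k => // k _; elim: k => [|k IH] t0 //.
rewrite digitsS IH => [|i /andP[i_gt1 i_le]]; last by apply: t0; rewrite i_gt1 leqW.
by rewrite (t0 k.+2) ?leqnn ?cats0.
Qed.

Lemma sumn_map_digits f t k :
  sumn (map f (digits t k)) = \sum_(1 <= i < k.+1) t i * f i.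
Proof.
elim: k => [|k IH]; first by rewrite big_geq.
by rewrite big_nat_recr //= map_cat sumn_cat IH map_nseq sumn_nseq mulnC.
Qed.

Section Repunits.

Variable b : nat.

Fixpoint repunit i := if i is i'.+1 then b * repunit i' + 1 else 0.

Definition sumrep (u : seq nat) := sumn (map repunit u).

Lemma repunitS i : repunit i.+1 = b * repunit i + 1. Proof. by []. Qed.

Lemma repunit_pow i : 0 < b -> (b - 1) * repunit i + 1 = b ^ i.
Proof. by move=> b_gt0; elim: i => [|i IH]; rewrite ?expn0 ?muln0 // repunitS expnS -IH; nia. Qed.

Lemma leq_repunit : 0 < b -> {mono repunit : i j / i <= j}.
Proof.
move=> b_gt0; apply: leq_mono; apply: homo_ltn => [j i k|i]; first exact: ltn_trans.
by rewrite repunitS; nia.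
Qed.

Lemma ltn_repunit : 0 < b -> {mono repunit : i j / i < j}.
Proof. by move=> b_gt0 i j; rewrite !ltnNge leq_repunit. Qed.

Lemma repunit_gt0 i : (0 < repunit i) = (0 < i).
Proof. by case: i => //= i; rewrite addn1. Qed.

Lemma sumrep_cat u v : sumrep (u ++ v) = sumrep u + sumrep v.
Proof. by rewrite /sumrep map_cat sumn_cat. Qed.

Lemma sumrep_nseq c i : sumrep (nseq c i) = c * repunit i.
Proof. by rewrite /sumrep map_nseq sumn_nseq mulnC. Qed.

Lemma sumrep_rem j u : j \in u -> sumrep u = repunit j + sumrep (rem j u).
Proof. by move=> /perm_to_rem/(perm_map repunit)/perm_sumn. Qed.

Lemma leq_repunit_sumrep j u : j \in u -> repunit j <= sumrep u.
Proof. by move=> /sumrep_rem->; apply: leq_addr. Qed.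

Lemma sumrep_gt0 u : (0 < sumrep u) = has (leq 1) u.
Proof.
elim: u => [|j u IH] //=; rewrite addn_gt0 -/(sumrep u) IH.
by rewrite repunit_gt0.
Qed.

Lemma size_le_sumrep u : all (leq 1) u -> size u <= sumrep u.
Proof.
elim: u => [|j u IH] //= /andP[j_gt0 /IH]; rewrite /sumrep /= -/(sumrep u).
by rewrite -repunit_gt0 in j_gt0; rewrite -add1n; apply: leq_add.
Qed.

Definition extractable m := forall u, all (leq^~ m) u -> repunit m <= sumrep u ->
  exists u', [/\ all (leq^~ m) u', sumrep u' + repunit m = sumrep u & size u' < size u].

Lemma extractable_iter m c u : extractable m -> all (leq^~ m) u ->
    c * repunit m <= sumrep u ->
  exists u', [/\ all (leq^~ m) u', sumrep u' + c * repunit m = sumrep u & size u' + c <= size u].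
Proof.
move=> ext_m; elim: c => [|c IH] u_le; first by exists u; rewrite !addn0.
rewrite mulSn => cm_le.
have [|u1 [u1_le u1_sum u1_size]] := IH u_le; first lia.
have [|u2 [u2_le u2_sum u2_size]] := ext_m u1 u1_le; first lia.
by exists u2; split=> //; lia.
Qed.

Lemma extract_mem m j u : all (leq^~ m) u -> j \in u ->
  exists u', [/\ all (leq^~ m) u', sumrep u' + repunit j = sumrep u & size u' < size u].
Proof.
move=> u_le j_in; exists (rem j u); rewrite (sumrep_rem j_in) addnC size_rem //.
split=> //; last by case: (u) j_in.
by apply/allP => i /mem_rem; apply: (allP u_le).
Qed.

(* Since repunit M.+1 = b * repunit M + 1, extract b copies of repunit M
   and then split some positive j into b copies of j - 1. *)
Lemma extractable_repunit m : extractable m.+1.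
Proof.
elim: m => [|M IH] u u_le rep_le.
  have [|m_notin] := boolP (1 \in u); first exact: extract_mem.
  suff u0 : sumrep u = 0 by move: rep_le; rewrite u0 /= muln0.
  apply/eqP; rewrite eqn0Ngt sumrep_gt0 -all_predC; apply/allP => j j_in /=.
  by case: j j_in (allP u_le j j_in) => [|[|]] //; rewrite (negbTE m_notin).
have [|m_notin] := boolP (M.+2 \in u); first exact: extract_mem.
have u_le' : all (leq^~ M.+1) u.
  apply/allP => j j_in; move/allP: u_le => /(_ j j_in).
  by rewrite leq_eqVlt => /orP[/eqP j_eq|]; [move: m_notin; rewrite -j_eq j_in|].
have [|u1 [u1_le u1_sum u1_size]] := extractable_iter (c := b) IH u_le'.
  by move: rep_le; rewrite repunitS; lia.
have /hasP[j j_in j_gt0] : has (leq 1) u1.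
  by rewrite -sumrep_gt0; move: rep_le; rewrite repunitS; lia.
have j_le := allP u1_le j j_in.
have [u2 [u2_le u2_sum u2_size]] := extract_mem u1_le j_in.
exists (nseq b j.-1 ++ u2); split.
- rewrite all_cat all_nseq; apply/andP; split; first by apply/orP; right; lia.
  by apply/allP => i /(allP u2_le); lia.
- move: u1_sum u2_sum; rewrite sumrep_cat sumrep_nseq.
  by case: j j_gt0 {j_in j_le} => // j _; rewrite repunitS /=; lia.
- by rewrite size_cat size_nseq; lia.
Qed.

Definition skew k (t : nat -> nat) :=
  (forall i, 1 <= i <= k -> t i <= b) /\
  (forall i, 1 <= i <= k -> t i = b -> forall j, 1 <= j < i -> t j = 0).

Lemma skew_trunc k t : skew k.+1 t -> skew k t.
Proof.
case=> t_le t_top; split=> i /andP[i_gt0 i_le].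
  by apply: t_le; rewrite i_gt0 leqW.
by apply: t_top; rewrite i_gt0 leqW.
Qed.

Lemma skew_set k t c : skew k t -> c < b -> skew k.+1 [eta t with k.+1 |-> c].
Proof.
case=> t_le t_top c_lt; split=> i /andP[i_gt0 i_le] /=; case: eqP => [_|/eqP i_neq].
- exact: ltnW.
- by apply: t_le; rewrite i_gt0 -ltnS ltn_neqAle i_neq.
- by move=> c_eq; move: c_lt; rewrite c_eq ltnn.
move=> ti_eq j /andP[j_gt0 j_lt]; have i_lt : i < k.+1 by rewrite ltn_neqAle i_neq.
rewrite ifN_eq; last by rewrite ltn_eqF // (ltn_trans j_lt i_lt).
by apply: (t_top i); rewrite ?i_gt0 ?j_gt0 // -ltnS.
Qed.

Lemma skew_lt k t : t 1 <= b -> (forall i, 1 < i <= k -> t i < b) -> skew k t.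
Proof.
move=> t1_le t_lt; split=> i /andP[i_gt0 i_le].
  by case: i i_gt0 i_le => [|[|i]] // _ i_le; apply/ltnW/t_lt.
case: i i_gt0 i_le => [|[|i]] // _ i_le; first by move=> _ j; lia.
by move/eqP; rewrite ltn_eqF ?t_lt.
Qed.

Lemma sumrep_digits_lt k t : 0 < b -> skew k t -> sumrep (digits t k) < repunit k.+1.
Proof.
move=> b_gt0; elim: k t => [|k IH] t t_skew; first by rewrite /= muln0.
have [t_le t_top] := t_skew.
rewrite digitsS sumrep_cat sumrep_nseq (repunitS k.+1).
have [tk_eq|tk_neq] := eqVneq (t k.+1) b.
  rewrite tk_eq digits_eq0 => [|i /andP[i_gt0 i_le]]; first by rewrite /sumrep /=; lia.
  by apply: (t_top k.+1 (leqnn _) tk_eq); rewrite i_gt0.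
have: t k.+1 <= b - 1 by have := t_le k.+1 (leqnn _); lia.
move/(leq_mul (leqnn (repunit k.+1))); have := IH t (skew_trunc t_skew); nia.
Qed.

Lemma skew_digits_exists k N : 0 < b -> N < repunit k.+1 ->
  exists t, skew k t /\ sumrep (digits t k) = N.
Proof.
move=> b_gt0; elim: k N => [|k IH] N N_lt.
  exists (fun=> 0); split; first by split=> -[|i].
  by case: N N_lt => // N; rewrite /= muln0.
have rep_gt0 : 0 < repunit k.+1 by rewrite repunit_gt0.
have [N_eq|N_neq] := eqVneq N (b * repunit k.+1).
  exists [eta (fun=> 0) with k.+1 |-> b]; split.
    split=> i /andP[_ i_le] /=; first by case: eqP => _; rewrite ?leqnn.
    case: eqP => [-> _ j /andP[_ j_lt] /=| _]; first by rewrite ltn_eqF.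
    by move=> b0; move: b_gt0; rewrite -b0.
  rewrite /= eqxx digits_eq0 => [|i /andP[_ i_le] /=]; first by rewrite sumrep_nseq N_eq.
  by rewrite ltn_eqF.
have q_lt : N %/ repunit k.+1 < b.
  by rewrite ltn_divLR //; move: N_lt; rewrite repunitS; lia.
have [t [t_skew t_sum]] := IH (N %% repunit k.+1) (ltn_pmod _ rep_gt0).
exists [eta t with k.+1 |-> N %/ repunit k.+1]; split.
  exact: skew_set.
rewrite /= eqxx sumrep_cat sumrep_nseq (@eq_digits _ t).
  by rewrite t_sum addnC -divn_eq.
by move=> i /= /andP[_ i_le]; rewrite ltn_eqF.
Qed.

Lemma size_digits_min k t u : 0 < b -> skew k t -> sumrep u = sumrep (digits t k) ->
  size (digits t k) <= size u.
Proof.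
move=> b_gt0; elim: k t u => [|k IH] t u t_skew //.
have := sumrep_digits_lt b_gt0 t_skew.
rewrite digitsS size_cat size_nseq sumrep_cat sumrep_nseq => t_lt.
suff: forall c v, c <= t k.+1 -> sumrep v = sumrep (digits t k) + c * repunit k.+1 ->
    size (digits t k) + c <= size v by apply.
elim=> [|c IHc] v c_le v_sum.
  by rewrite addn0; apply: IH (skew_trunc t_skew) _; rewrite v_sum mul0n addn0.
have v_lt : sumrep v < repunit k.+2.
  by apply: leq_ltn_trans t_lt; rewrite v_sum leq_add2l leq_mul2r c_le orbT.
have v_le : all (leq^~ k.+1) v.
  apply/allP => j j_in; rewrite -ltnS -(ltn_repunit b_gt0).
  exact: leq_ltn_trans (leq_repunit_sumrep j_in) v_lt.
have [|v' [_ v'_sum v'_size]] := extractable_repunit v_le; first by rewrite v_sum mulSn; lia.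
have := IHc v' (ltnW c_le); rewrite mulSn in v_sum; lia.
Qed.

End Repunits.

Lemma eqn_modMl_coprime d e m n :
  coprime d e -> (e * m == e * n %[mod d]) = (m == n %[mod d]).
Proof.
move=> de_coprime; have ordered i j : j <= i -> (e * i == e * j %[mod d]) = (i == j %[mod d]).
  by move=> ji; rewrite !eqn_mod_dvd ?leq_mul2l ?ji ?orbT // -mulnBr Gauss_dvdr.
by case: (leqP n m) => [/ordered //|/ltnW/ordered]; rewrite eq_sym => ->; rewrite eq_sym.
Qed.

Lemma eq_inApery (S S' : nat -> Prop) x s :
  (forall y, S y <-> S' y) -> inApery S x s <-> inApery S' x s.
Proof. by move=> SS'; split=> -[/SS' Ss Nred]; split=> // -[xs /SS' ?]; apply: Nred. Qed.

(* The monoid generated by the s0 + e * repunit b i, i >= 0. *)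
Definition repunit_semigroup b s0 e y := exists u, y = s0 * size u + e * sumrep b u.

Section Apery.

Variables (b s0 e k : nat) (R : (nat -> nat) -> Prop).
Hypotheses (b_gt0 : 0 < b) (s0_gt0 : 0 < s0) (s0_le : s0 <= e.+1) (s0e_coprime : coprime s0 e).
Hypothesis R_skew : forall t, R t -> skew b k t.
Hypothesis R_lt : forall t, R t -> sumrep b (digits t k) < s0.
Hypothesis R_onto : forall N, N < s0 -> exists2 t, R t & sumrep b (digits t k) = N.

Let S := repunit_semigroup b s0 e.

Lemma size_digits_le t u : R t -> sumrep b (digits t k) = sumrep b u %% s0 ->
  size (digits t k) <= size u + e * (sumrep b u %/ s0).
Proof.
move=> Rt t_sum; have [q0|q_gt0] := posnP (sumrep b u %/ s0).
  rewrite q0 muln0 addn0; apply: (size_digits_min b_gt0 (R_skew Rt)).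
  by rewrite t_sum modn_small // -[s0]mul1n -ltn_divLR // q0.
have := size_le_sumrep b (all_digits_gt0 t k); have := R_lt Rt.
have := leq_mul (leqnn e) q_gt0; lia.
Qed.

Lemma apery_digits t : R t ->
  inApery S s0 (s0 * size (digits t k) + e * sumrep b (digits t k)).
Proof.
move=> Rt; split; first by exists (digits t k).
case=> s0_le_x [u]; set T := size _; set N := sumrep b _; set W := sumrep b u.
move=> u_eq; have x_eq : s0 * T + e * N = s0 * (size u).+1 + e * W by lia.
have N_mod : N = W %% s0.
  have N_lt : N < s0 := R_lt Rt.
  rewrite -(modn_small N_lt); apply/eqP.
  rewrite -(eqn_modMl_coprime _ _ s0e_coprime) -(eqn_modDl (s0 * T)) x_eq.
  by rewrite ![s0 * _]mulnC !modnMDl.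
have := size_digits_le Rt N_mod; rewrite -/W.
have : T = (size u).+1 + e * (W %/ s0).
  apply/eqP; rewrite -(eqn_pmul2l s0_gt0); apply/eqP.
  by move: x_eq; rewrite {1}(divn_eq W s0) -N_mod; nia.
lia.
Qed.

Lemma apery_digitsP x : inApery S s0 x ->
  exists t, R t /\ x = s0 * size (digits t k) + e * sumrep b (digits t k).
Proof.
case=> [[u ->]] not_reducible.
have [t Rt t_sum] := R_onto (ltn_pmod (sumrep b u) s0_gt0).
exists t; split=> //; have T_le := size_digits_le Rt t_sum.
have W_eq := divn_eq (sumrep b u) s0; rewrite -t_sum in W_eq.
move: T_le W_eq; set T := size _; set N := sumrep b _; set q := _ %/ s0 => T_le W_eq.
suff T_eq : T = size u + e * q by rewrite W_eq T_eq; nia.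
apply/eqP; rewrite eqn_leq T_le leqNgt; apply/negP => T_lt.
apply: not_reducible; split; first by nia.
exists (nseq (size u + e * q - T).-1 0 ++ digits t k).
by rewrite size_cat size_nseq sumrep_cat sumrep_nseq muln0 -/T -/N W_eq; nia.
Qed.

Theorem apery_repunit_semigroup x : inApery S s0 x <->
  exists t, R t /\ x = s0 * size (digits t k) + e * sumrep b (digits t k).
Proof. by split=> [|[t [Rt ->]]]; [apply: apery_digitsP | apply: apery_digits]. Qed.

End Apery.

Lemma big_ord_sumn_map (f a : nat -> nat) N :
  exists u, \sum_(i < N) a i * f i = sumn (map f u).
Proof.
elim: N => [|N [u IH]]; first by exists [::]; rewrite big_ord0.
exists (u ++ nseq (a N) N).
by rewrite big_ord_recr /= IH map_cat sumn_cat map_nseq sumn_nseq mulnC.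
Qed.

Lemma sumn_map_count (f : nat -> nat) u N : all (gtn N) u ->
  sumn (map f u) = \sum_(i < N) count_mem (i : nat) u * f i.
Proof.
elim: u => [|x u IH] /=; first by rewrite big1.
case/andP=> x_lt /IH ->; have := big_ord1_eq addn f x N; rewrite x_lt => <-.
rewrite big_mkcond -big_split /=.
by apply: eq_bigr => i _; rewrite mulnDl eq_sym; case: (x == _); rewrite ?mul1n.
Qed.

Lemma inT_sumn b n y : inT b n y <-> exists u, y = sumn (map (sgen b n) u).
Proof.
split=> [[N [a ->]]|[u ->]]; first exact: big_ord_sumn_map.
exists (sumn u).+1, (fun i => count_mem i u); apply: sumn_map_count.
apply/allP => x /perm_to_rem/perm_sumn /= ->; exact: leq_addr.
Qed.

Lemma sgen0_repunit b n : 0 < b ->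
  sgen b n 0 = (b - 1) * (repunit b n.+1 + repunit b n) + 3.
Proof.
move=> b_gt0; rewrite /sgen addn0 mulnDl mul1n -expnS.
by rewrite -(repunit_pow n.+1 b_gt0) -(repunit_pow n b_gt0); lia.
Qed.

Lemma sgen_repunit b n i : 0 < b ->
  sgen b n i = sgen b n 0 + (b + 1) * b ^ n * (b - 1) * repunit b i.
Proof. by move=> b_gt0; rewrite /sgen addn0 expnD -(repunit_pow i b_gt0); nia. Qed.

Lemma sumn_map_sgen b n u : 0 < b ->
  sumn (map (sgen b n) u) = sgen b n 0 * size u + (b + 1) * b ^ n * (b - 1) * sumrep b u.
Proof.
move=> b_gt0; elim: u => [|i u IH] /=; first by rewrite !muln0.
by rewrite IH (sgen_repunit _ i b_gt0) /sumrep /= -/(sumrep b u); lia.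
Qed.

Lemma inT_repunit_semigroup b n y : 0 < b ->
  inT b n y <-> repunit_semigroup b (sgen b n 0) ((b + 1) * b ^ n * (b - 1)) y.
Proof.
by move=> b_gt0; rewrite inT_sumn; split=> -[u ->]; exists u; rewrite sumn_map_sgen.
Qed.

(* s'_0 = 3 (mod b - 1): this is where b <> 1 (mod 3) is needed. *)
Lemma coprime_sgen0 b n : 2 <= b -> b %% 3 != 1 ->
  coprime (sgen b n 0) ((b + 1) * b ^ n * (b - 1)).
Proof.
move=> b_ge2 b_mod3; rewrite coprimeMr; apply/andP; split.
  by rewrite /sgen addn0 addn1 coprime_sym coprimenS.
rewrite sgen0_repunit 1?ltnW // coprime_sym /coprime mulnC gcdnMDl.
rewrite -/(coprime _ 3) coprime_sym prime_coprime //; apply: contra b_mod3 => /dvdnP[c c_eq].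
by rewrite -(subnK (ltnW b_ge2)) c_eq -modnDm modnMl.
Qed.

Section DigitTuples.

Variables b n : nat.
Hypotheses (b_gt1 : 1 < b) (n_gt1 : 1 < n).

Let b_gt0 : 0 < b := ltnW b_gt1.
Let n_gt0 : 0 < n := ltnW n_gt1.

Lemma inR_skew t : inR b n t -> skew b n.+1 t.
Proof. by case=> t_le [t_top _]; split. Qed.

Lemma inR_lt t : inR b n t -> sumrep b (digits t n.+1) < sgen b n 0.
Proof.
move=> t_R; have t_skew := inR_skew t_R; case: t_R => _ [_ [tn1_le [tn1_eq tn_eq]]].
rewrite sgen0_repunit // digitsS sumrep_cat sumrep_nseq.
have [tn1_lt|tn1_ge] := ltnP (t n.+1) (b - 1).
  have := sumrep_digits_lt b_gt0 (skew_trunc t_skew).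
  have := leq_mul tn1_lt (leqnn (repunit b n.+1)); nia.
have {tn1_ge tn1_le}tn1_b : t n.+1 = b - 1 by lia.
rewrite (digits_pred _ n_gt0) sumrep_cat sumrep_nseq.
have [tn_lt|tn_ge] := ltnP (t n) (b - 1).
  have t_skew' : skew b n.-1 t.
    by apply: (@skew_trunc b n.-1); rewrite prednK //; apply: skew_trunc t_skew.
  have := sumrep_digits_lt b_gt0 t_skew'; rewrite prednK //.
  have := leq_mul tn_lt (leqnn (repunit b n)); nia.
have [t1_le t_zero] := tn_eq ltac:(lia) tn1_b.
rewrite digits_low => [||i /andP[i_gt1 i_le]]; last by apply: t_zero; lia.
  by rewrite sumrep_nseq /= muln0; nia.
by rewrite -ltnS prednK.
Qed.

Lemma inR_onto_low N : N < (b - 1) * repunit b n.+1 ->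
  exists2 t, inR b n t & sumrep b (digits t n.+1) = N.
Proof.
move=> N_lt; have rep_gt0 : 0 < repunit b n.+1 by rewrite repunit_gt0.
have [|t [t_skew t_sum]] := skew_digits_exists (k := n.+1) (N := N) b_gt0.
  by have := repunitS b n.+1; nia.
have tn1_lt : t n.+1 < b - 1.
  rewrite -(ltn_pmul2r rep_gt0); apply: leq_ltn_trans N_lt.
  by rewrite -t_sum digitsS sumrep_cat sumrep_nseq leq_addl.
have [t_le t_top] := t_skew; exists t => //.
by do 3!split=> //; [lia | split=> [|_] ?; exfalso; lia].
Qed.

Lemma inR_onto_mid N :
    (b - 1) * repunit b n.+1 <= N < (b - 1) * (repunit b n.+1 + repunit b n) ->
  exists2 t, inR b n t & sumrep b (digits t n.+1) = N.
Proof.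
case/andP=> N_ge N_lt; pose N' := N - (b - 1) * repunit b n.+1.
have N'_lt : N' < (b - 1) * repunit b n by rewrite /N'; nia.
have [|t [t_skew t_sum]] := skew_digits_exists (k := n) (N := N') b_gt0.
  by have := repunitS b n; nia.
have tn_lt : t n < b - 1.
  rewrite -(ltn_pmul2r (_ : 0 < repunit b n)) ?repunit_gt0 //; apply: leq_ltn_trans N'_lt.
  by rewrite -t_sum (digits_pred _ n_gt0) sumrep_cat sumrep_nseq leq_addl.
exists [eta t with n.+1 |-> b - 1].
  have [|t_le t_top] := skew_set (c := b - 1) t_skew; first lia.
  split=> //; split=> //=; rewrite eqxx (ltn_eqF (ltnSn n)).
  by split; last split=> [_|? _]; lia.
rewrite digitsS sumrep_cat sumrep_nseq (@eq_digits _ t) => [|i /andP[_ i_le] /=].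
  have -> : [eta t with n.+1 |-> b - 1] n.+1 = b - 1 by rewrite /= eqxx.
  by rewrite t_sum subnK.
by rewrite ltn_eqF.
Qed.


Lemma inR_onto_top N :
    (b - 1) * (repunit b n.+1 + repunit b n) <= N <
      (b - 1) * (repunit b n.+1 + repunit b n) + 3 ->
  exists2 t, inR b n t & sumrep b (digits t n.+1) = N.
Proof.
case/andP=> N_ge N_lt; pose r := N - (b - 1) * (repunit b n.+1 + repunit b n).
pose t := [eta (fun=> 0) with 1 |-> r, n |-> b - 1, n.+1 |-> b - 1].
have n1_neq : (n.+1 == n) = false by rewrite gtn_eqF.
have tn : t n = b - 1 by rewrite /t /= gtn_eqF // eqxx.
have tn1 : t n.+1 = b - 1 by rewrite /t /= n1_neq eqxx (@gtn_eqF 1 n.+1) // ltnW.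
have t_other (i : nat) : i != 1 -> i != n -> i != n.+1 -> t i = 0.
  by rewrite /t /= => /negPf-> /negPf-> /negPf->.
have t_skew : skew b n.+1 t.
  apply: skew_lt => [|i /andP[i_gt1 _]]; first by rewrite /t /=; lia.
  rewrite /t /= (gtn_eqF i_gt1); case: eqP => _; first lia.
  by case: eqP => _; lia.
exists t.
  have [t_le t_top] := t_skew; do 3!split=> //; rewrite ?tn ?tn1 //.
  by split=> // _ _; split=> [|i _]; [rewrite /t /=; lia | exact: t_other].
rewrite digitsS (digits_pred _ n_gt0) digits_low => [||i /andP[i_gt1 i_le]].
- have rep1 : repunit b 1 = 1 by rewrite /= muln0.
  by rewrite !sumrep_cat !sumrep_nseq (_ : t 1 = r) // tn tn1 rep1 /r; lia.
- by rewrite -ltnS prednK.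
by apply: t_other; apply/eqP; lia.
Qed.

Lemma inR_onto N : N < sgen b n 0 ->
  exists2 t, inR b n t & sumrep b (digits t n.+1) = N.
Proof.
rewrite sgen0_repunit // => N_lt.
have [N_lt1|N_ge1] := ltnP N ((b - 1) * repunit b n.+1); first exact: inR_onto_low.
have [N_lt2|N_ge2] := ltnP N ((b - 1) * (repunit b n.+1 + repunit b n)).
  by apply: inR_onto_mid; rewrite N_ge1.
by apply: inR_onto_top; rewrite N_ge2.
Qed.

End DigitTuples.

Theorem mainTheorem12 (b n : nat) (hb : 2 <= b) (hb3 : b %% 3 != 1) (hn : 2 <= n) :
  forall x : nat,
    inApery (inT b n) (sgen b n 0) x <->
    exists t : nat -> nat, inR b n t /\ x = \sum_(1 <= i < n.+2) t i * sgen b n i.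
Proof.
move=> x; have b_gt0 : 0 < b := ltnW hb.
have s0_gt0 : 0 < sgen b n 0 by rewrite /sgen addn1.
have s0_le : sgen b n 0 <= ((b + 1) * b ^ n * (b - 1)).+1.
  by rewrite /sgen addn0 addn1 ltnS leq_pmulr // subn_gt0.
rewrite (@eq_inApery _ _ _ _ (fun y => inT_repunit_semigroup n y b_gt0)).
rewrite (apery_repunit_semigroup b_gt0 s0_gt0 s0_le (coprime_sgen0 n hb hb3)
  (@inR_skew b n) (inR_lt hb hn) (inR_onto hb hn)).
by split=> -[t [t_R ->]]; exists t; rewrite -sumn_map_digits sumn_map_sgen.
Qed.
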